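(* Let $r \ge 3$, $1 \le k \le r-1$ and $p \ge 1$ be integers. There exists $n_0 = n_0(r,k,p)$ such that for all $n \ge n_0$: if $\mathcal{G}$ is an $r$-uniform $n$-vertex hypergraph with \[ |E(\mathcal{G})| \ge 2 r^{r-k} f(r, p r^{r-k}) \binom{n-k-1}{r-k-1}, \] then $\mathcal{G}$ contains a sunflower with $p$ petals whose core has size at most $k$.
   Context: A sunflower with $p$ petals is a collection of $p$ distinct sets $h_1,\dots,h_p$ (here hyperedges of $\mathcal{G}$) together with a set $Y$ (the core) such that $Y \subseteq h_i$ for all $i$ and $h_i \cap h_j = Y$ for all $i \ne j$; the petals are the sets $h_i \setminus Y$. For integers $r,p \ge 1$, $f(r,p)$ denotes the minimum integer such that every $r$-uniform hypergraph with at least $f(r,p)$ hyperedges contains a sunflower with $p$ petals (this is finite by the Erdős–Rado Sunflower Lemma). *)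

From mathcomp Require Import all_boot.
From mathcomp Require Import boolp.

Set Implicit Arguments.
Unset Strict Implicit.
Unset Printing Implicit Defensive.

Definition uniform (T : finType) (r : nat) (E : {set {set T}}) : Prop :=
  forall e, e \in E -> #|e| = r.

Definition is_sunflower (T : finType) (E : {set {set T}}) (p : nat)
    (h : 'I_p -> {set T}) (Y : {set T}) : Prop :=
  [/\ injective h,
      (forall i, h i \in E),
      (forall i, Y \subset h i) &
      (forall i j, i != j -> h i :&: h j = Y)].

Definition has_sunflower (T : finType) (E : {set {set T}}) (p : nat) : Prop :=
  exists (h : 'I_p -> {set T}) (Y : {set T}), is_sunflower E h Y.

(* m hyperedges force a sunflower with p petals in every r-uniform hypergraph
   (every finite hypergraph is isomorphic to one on 'I_n). *)
Definition forces_sunflower (r p m : nat) : Prop :=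
  forall (n : nat) (E : {set {set 'I_n}}),
    uniform r E -> m <= #|E| -> has_sunflower E p.

(* f(r,p): the minimum such m (exists by the Erdos-Rado sunflower lemma;
   the default 0 in the other branch is never used). *)
Definition f (r p : nat) : nat :=
  match pselect (exists m, `[< forces_sunflower r p m >]) with
  | left H => ex_minn H
  | right _ => 0
  end.

From mathcomp Require Import all_boot boolp zify.

(* The theorem follows from an Erdos-Rado argument relative to codegrees of
   (k + 1)-sets.  If every j-set lies in at most D edges of an r-uniform
   hypergraph E and #|E| > ((p - 1) r)^j D, then E has a sunflower with p
   petals and a core of fewer than j vertices (sunflower_small_core), proved
   after the basic facts on links and matchings: either some vertex has large
   degree and we recurse into its link, or all degrees are small and a greedy
   matching gives p disjoint edges.  In an n-vertex r-uniform hypergraph a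
   (k + 1)-set lies in at most C(n - k - 1, r - k - 1) edges.  It remains to
   compare ((p - 1) r)^(k + 1) with 2 r^(r-k) f(r, p r^(r-k)): the case j = r
   of the same lemma is the Erdos-Rado sunflower lemma, so f is the minimum
   of a nonempty set of thresholds, and the hypergraph of graphs of functions
   'I_r -> 'I_q shows f(r, q + 1) > q^r. *)

Set Implicit Arguments.
Unset Strict Implicit.
Unset Printing Implicit Defensive.

Section Hypergraphs.

Variable T : finType.
Implicit Types (E M : {set {set T}}) (S Y : {set T}) (v : T).

Definition codegree E S : nat := #|[set e in E | S \subset e]|.

(* Counting bound: removing S maps the edges through S injectively onto
   (r - #|S|)-subsets of the complement of S. *)
Lemma codegree_binomial E r S :
  uniform r E -> codegree E S <= 'C(#|T| - #|S|, r - #|S|).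
Proof.
move=> uE; set through := [set e in E | S \subset e].
have del_inj : {in through &, injective (fun e => e :\: S)}.
  move=> e1 e2; rewrite !inE => /andP[_ Se1] /andP[_ Se2] eq12.
  by rewrite -(setID e1 S) -(setID e2 S) eq12 (setIidPr Se1) (setIidPr Se2).
rewrite /codegree -/through -(card_in_imset del_inj).
have <- : #|~: S| = #|T| - #|S| by rewrite -(cardsC S) addKn.
rewrite -cards_draws; apply: subset_leq_card; apply/subsetP => A.
case/imsetP=> e /[!inE] /andP[eE Se] ->.
by rewrite cardsD (setIidPr Se) uE // setDE subsetIr eqxx.
Qed.

Definition link E v : {set {set T}} := [set e :\ v | e in E & v \in e].

Lemma card_link E v : #|link E v| = #|[set e in E | v \in e]|.
Proof.
apply: card_in_imset => e1 e2; rewrite !inE => /andP[_ ve1] /andP[_ ve2] eq12.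
by rewrite -(setD1K ve1) -(setD1K ve2) eq12.
Qed.

Lemma link_uniform E r v : uniform r E -> uniform r.-1 (link E v).
Proof.
move=> uE e' /imsetP[e]; rewrite inE => /andP[eE ve] ->.
by have := cardsD1 v e; rewrite ve uE // => ->.
Qed.

Lemma codegree_link E v S :
  v \notin S -> codegree (link E v) S <= codegree E (v |: S).
Proof.
move=> vS; apply: leq_trans (leq_imset_card (fun e => e :\ v) _).
apply: subset_leq_card; apply/subsetP => e'; rewrite inE => /andP[/imsetP[e]].
rewrite inE => /andP[eE ve] -> Se; apply/imsetP; exists e => //.
rewrite inE eE subUset sub1set ve /=; exact: subset_trans Se (subD1set e v).
Qed.

(* No link edge contains v. *)
Lemma codegree_link_mem E v S : v \in S -> codegree (link E v) S = 0.
Proof.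
move=> vS; apply/eqP; rewrite cards_eq0; apply/eqP/setP => e'.
rewrite !inE; apply/negbTE/andP => -[/imsetP[e _ ->] /subsetP/(_ v vS)].
by rewrite !inE eqxx.
Qed.

Lemma sunflower_lift E v p (h : 'I_p -> {set T}) Y :
  is_sunflower (link E v) h Y ->
  is_sunflower E (fun i => v |: h i) (v |: Y).
Proof.
move=> [h_inj hL hY hI].
have vh i : v \notin h i by case/imsetP: (hL i) => e _ ->; rewrite !inE eqxx.
split.
- move=> i1 i2 eq12; apply: h_inj.
  by rewrite -(setU1K (vh i1)) -(setU1K (vh i2)) eq12.
- by move=> i; case/imsetP: (hL i) => e /[!inE] /andP[eE ve] ->; rewrite setD1K.
- by move=> i; apply: setUS.
- by move=> i j ij; rewrite -setUIr hI.
Qed.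

Lemma matching_extend E M r B :
  uniform r E -> (forall v, #|[set e in E | v \in e]| <= B) ->
  M \subset E -> #|M| * r * B < #|E| ->
  exists2 e, e \in E & [disjoint e & cover M].
Proof.
move=> uE degB ME ltE; apply/exists_inP; apply: contraTT ltE.
move=> /exists_inPn meet; rewrite -leqNgt.
pose stars := [set [set e in E | v \in e] | v in cover M].
have cover_E : E \subset cover stars.
  apply/subsetP => e eE; have := meet e eE; rewrite -setI_eq0 cover_imset.
  case/set0Pn => v; rewrite inE => /andP[ve vM]; apply/bigcupP; exists v => //.
  by rewrite inE eE.
have cover_card : #|cover M| <= #|M| * r.
  apply: leq_trans (leq_card_cover M).1 _; rewrite -sum_nat_const.
  by apply: leq_sum => e /(subsetP ME)/uE ->.
apply: leq_trans (subset_leq_card cover_E) _.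
apply: leq_trans (leq_card_cover stars).1 _.
apply: leq_trans (_ : _ <= #|stars| * B) _.
  by rewrite -sum_nat_const; apply: leq_sum => A /imsetP[v _ ->]; apply: degB.
by rewrite leq_mul // (leq_trans (leq_imset_card _ _) cover_card).
Qed.

Lemma matching_exists E r B q :
  uniform r E -> 0 < r -> (forall v, #|[set e in E | v \in e]| <= B) ->
  q.-1 * r * B < #|E| ->
  exists M, [/\ M \subset E, trivIset M & #|M| = q].
Proof.
move=> uE r_gt0 degB; elim: q => [|q IHq] ltE.
  exists set0; split; [exact: sub0set | | exact: cards0].
  by apply/trivIsetP => A; rewrite inE.
have [|M [ME tM cardM]] := IHq.
  by apply: leq_ltn_trans ltE; rewrite !leq_mul2r leq_pred !orbT.
have [|e eE eM] := matching_extend uE degB ME; first by rewrite cardM.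
have M0 : set0 \notin M.
  by apply/negP => /(subsetP ME)/uE; rewrite cards0 => r0; rewrite -r0 in r_gt0.
have eA A : A \in M -> [disjoint e & A].
  by move=> AM; apply: disjointWr eM; apply: bigcup_sup.
have [tM' eM'] := trivIsetU1 eA tM M0.
by exists (e |: M); rewrite subUset sub1set eE cardsU1 eM' cardM.
Qed.

Lemma sunflower_of_matching E M p :
  M \subset E -> trivIset M -> #|M| = p ->
  exists h : 'I_p -> {set T}, is_sunflower E h set0.
Proof.
move=> ME /trivIsetP tM cardM.
exists (fun i => enum_val (cast_ord (esym cardM) i)); split.
- by move=> i j /enum_val_inj/cast_ord_inj.
- by move=> i; apply: (subsetP ME); apply: enum_valP.
- by move=> i; apply: sub0set.
move=> i j ij; apply: disjoint_setI0; apply: tM; try exact: enum_valP.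
by apply: contra ij => /eqP/enum_val_inj/cast_ord_inj ->.
Qed.

(* Either some
   vertex has large degree and we recurse into its link, or all degrees are
   small and p disjoint edges exist. *)
Lemma sunflower_small_core p j D : forall E r,
  j <= r -> uniform r E ->
  (forall S, #|S| = j -> codegree E S <= D) ->
  (p.-1 * r) ^ j * D < #|E| ->
  exists (h : 'I_p -> {set T}) Y, is_sunflower E h Y /\ #|Y| < j.
Proof.
elim: j => [|j IHj] E r jr uE codegE ltE.
  have := codegE set0 (cards0 _); rewrite /codegree.
  have -> : [set e in E | set0 \subset e] = E.
    by apply/setP => e; rewrite inE sub0set andbT.
  by rewrite leqNgt -[D]mul1n ltE.
set B := (p.-1 * r) ^ j * D.
have [/existsP[v ltBv] | /existsPn small_deg] :=
  boolP [exists v, B < #|[set e in E | v \in e]|]; last first.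
  have degB v : #|[set e in E | v \in e]| <= B.
    by rewrite leqNgt small_deg.
  have ltE' : p.-1 * r * B < #|E| by rewrite mulnA -expnS.
  have r_gt0 : 0 < r := leq_trans (ltn0Sn j) jr.
  have [M [ME tM cardM]] := matching_exists uE r_gt0 degB ltE'.
  have [h sf] := sunflower_of_matching ME tM cardM.
  by exists h, set0; rewrite cards0.
have codegL S : #|S| = j -> codegree (link E v) S <= D.
  move=> cardS; have [vS|vS] := boolP (v \in S).
    by rewrite codegree_link_mem.
  apply: leq_trans (codegree_link E vS) (codegE _ _).
  by rewrite cardsU1 vS cardS.
have jr' : j <= r.-1 by rewrite -ltnS (ltn_predK jr).
have ltL : (p.-1 * r.-1) ^ j * D < #|link E v|.
  rewrite card_link; apply: leq_ltn_trans ltBv; apply: leq_mul => //.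
  have [->|j_gt0] := posnP j; first by rewrite !expn0.
  by rewrite leq_exp2r // leq_mul // leq_pred.
have [h [Y [sf cardY]]] := IHj _ _ jr' (link_uniform (v := v) uE) codegL ltL.
exists (fun i => v |: h i), (v |: Y); split; first exact: sunflower_lift.
rewrite cardsU1; apply: leq_ltn_trans (leq_add (leq_b1 _) (leqnn _)) _.
by rewrite add1n ltnS.
Qed.

End Hypergraphs.

(* forces_sunflower is stated on the vertex types 'I_n; it transfers to any
   finite vertex type by relabelling vertices with enum_rank. *)
Lemma forces_sunflower_on (T : finType) r p m (G : {set {set T}}) :
  forces_sunflower r p m -> uniform r G -> m <= #|G| -> has_sunflower G p.
Proof.
move=> forces uG leG.
pose relabel (e : {set T}) := [set enum_rank x | x in e].
have relabelK : cancel relabel (fun A : {set 'I_#|T|} => enum_rank @^-1: A).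
  by move=> e; apply/setP => x; rewrite inE mem_imset //; apply: enum_rank_inj.
have relabel_inj : injective relabel := can_inj relabelK.
have uE : uniform r (relabel @: G).
  by move=> _ /imsetP[e eG ->]; rewrite card_imset ?uG //; apply: enum_rank_inj.
have [|h [Y [h_inj hE hY hI]]] := forces _ _ uE; first by rewrite card_imset.
exists (fun i => enum_rank @^-1: h i), (enum_rank @^-1: Y); split.
- move=> i j; have [ei _ hi] := imsetP (hE i); have [ej _ hj] := imsetP (hE j).
  by rewrite hi hj !relabelK => eij; apply: h_inj; rewrite hi hj eij.
- by move=> i; have [e eG ->] := imsetP (hE i); rewrite relabelK.
- by move=> i; apply: preimsetS.
- by move=> i j ij; rewrite -preimsetI hI.
Qed.

Section ProductHypergraph.

(* The r-uniform hypergraph on 'I_r * 'I_q whose edges are the graphs of the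
   functions 'I_r -> 'I_q: it has q ^ r edges and no sunflower with q + 1
   petals, which shows f(r, q + 1) > q ^ r. *)
Variables r q : nat.

Definition graph_edge (x : {ffun 'I_r -> 'I_q}) : {set 'I_r * 'I_q} :=
  [set (a, x a) | a in 'I_r].

Definition product_hypergraph : {set {set 'I_r * 'I_q}} :=
  [set graph_edge x | x in {ffun 'I_r -> 'I_q}].

Lemma mem_graph_edge x a b : ((a, b) \in graph_edge x) = (x a == b).
Proof. by apply/imsetP/eqP => [[a' _ [-> ->]] // | <-]; exists a. Qed.

Lemma graph_edge_inj : injective graph_edge.
Proof.
move=> x y exy; apply/ffunP => a; apply/eqP.
by rewrite -mem_graph_edge exy mem_graph_edge.
Qed.

Lemma product_uniform : uniform r product_hypergraph.
Proof.
move=> _ /imsetP[x _ ->]; rewrite card_imset ?card_ord //.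
by move=> a b [].
Qed.

Lemma card_product_hypergraph : #|product_hypergraph| = q ^ r.
Proof.
by rewrite card_imset; [rewrite card_ffun !card_ord | exact: graph_edge_inj].
Qed.

(* In a sunflower of graphs with q + 1 petals, pigeonhole gives, for every
   coordinate a, two petals agreeing at a; then (a, _) lies in the core, so all
   petals agree at a, and all petals coincide. *)
Lemma product_sunflower_free :
  0 < q -> ~ has_sunflower product_hypergraph q.+1.
Proof.
move=> q_gt0 [h [Y [h_inj hG hY hI]]].
have /fin_all_exists[X hX] : forall i, exists x, h i = graph_edge x.
  by move=> i; have [x _ ->] := imsetP (hG i); exists x.
have agree a i j : X i a = X j a.
  have [i' [j' [ij' eqa]]] : exists i' j', i' != j' /\ X i' a = X j' a.
    apply: contrapT => all_distinct.
    have inj : injective (fun i => X i a).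
      move=> i1 i2 e12; apply/eqP; apply: contraT => ne12.
      by case: all_distinct; exists i1, i2.
    by move: (leq_card _ inj); rewrite !card_ord ltnn.
  have inY : (a, X i' a) \in Y.
    by rewrite -(hI _ _ ij') inE !hX !mem_graph_edge eqa !eqxx.
  have core m : X m a = X i' a.
    by apply/eqP; rewrite -mem_graph_edge -hX; apply: (subsetP (hY m)).
  by rewrite !core.
have : (ord0 : 'I_q.+1) = Ordinal (q_gt0 : 1 < q.+1).
  apply: h_inj; rewrite !hX; congr graph_edge.
  by apply/ffunP => a; apply: agree.
by move/(congr1 val).
Qed.

End ProductHypergraph.

Lemma f_spec r p m : forces_sunflower r p m ->
  forces_sunflower r p (f r p) /\
  forall m', forces_sunflower r p m' -> f r p <= m'.
Proof.
move=> forces; rewrite /f; case: pselect => [ex | no_threshold]; last first.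
  by case: no_threshold; exists m; apply/asboolP.
case: ex_minnP => m0 /asboolP forces0 min0; split=> // m' forces'.
by apply: min0; apply/asboolP.
Qed.

(* Erdos-Rado sunflower lemma: ((p - 1) r)^r + 1 edges force p petals, since
   an r-set lies in at most one edge of an r-uniform hypergraph. *)
Lemma erdos_rado r p : forces_sunflower r p ((p.-1 * r) ^ r).+1.
Proof.
move=> n E uE ltE.
have codeg (S : {set 'I_n}) : #|S| = r -> codegree E S <= 1.
  move=> cardS; apply: leq_trans (codegree_binomial S uE) _.
  by rewrite cardS subnn bin0.
have [|h [Y [sf _]]] := sunflower_small_core (p := p) (leqnn r) uE codeg.
  by rewrite muln1.
by exists h, Y.
Qed.

Lemma f_lower_bound r q : 0 < q -> q ^ r < f r q.+1.
Proof.
move=> q_gt0; have [forces _] := f_spec (@erdos_rado r q.+1).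
rewrite ltnNge; apply/negP => le_f.
apply: (product_sunflower_free (r := r) q_gt0).
apply: (forces_sunflower_on forces (@product_uniform r q)).
by rewrite card_product_hypergraph.
Qed.

(* Numerical comparison behind the theorem: ((p - 1) r)^(k + 1) is below
   the coefficient 2 r^(r-k) f(r, p r^(r-k)) of the edge threshold, because
   it is at most (p r^(r-k) - 1)^r < f(r, p r^(r-k)). *)
Lemma petal_bound r k p : 1 < r -> k < r -> 0 < p ->
  (p.-1 * r) ^ k.+1 < 2 * r ^ (r - k) * f r (p * r ^ (r - k)).
Proof.
move=> r_gt1 k_lt_r p_gt0; set M := p * r ^ (r - k).
have r_le_pow : r <= r ^ (r - k).
  by rewrite -{1}(expn1 r) leq_pexp2l ?subn_gt0 // ltnW.
have pr_lt_M : p.-1 * r < M.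
  apply: leq_trans (leq_mul (leqnn p) r_le_pow).
  by rewrite ltn_mul2r ltn_predL p_gt0 (ltnW r_gt1).
have M_gt1 : 1 < M.
  exact: leq_trans r_gt1 (leq_trans r_le_pow (leq_pmull _ p_gt0)).
have q_gt0 : 0 < M.-1 by rewrite -ltnS prednK ?(ltnW M_gt1).
apply: leq_ltn_trans (_ : M.-1 ^ r < _).
  apply: leq_trans (leq_pexp2l q_gt0 k_lt_r).
  by rewrite leq_exp2r // -ltnS prednK ?(ltnW M_gt1).
apply: leq_trans (f_lower_bound r q_gt0) _; rewrite prednK ?(ltnW M_gt1) //.
by rewrite leq_pmull // muln_gt0 expn_gt0 (ltnW r_gt1).
Qed.

Theorem lemma10 (r k p : nat) :
  3 <= r -> 1 <= k <= r - 1 -> 1 <= p ->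
  exists n0 : nat, forall (n : nat), n0 <= n ->
    forall E : {set {set 'I_n}}, uniform r E ->
      2 * r ^ (r - k) * f r (p * r ^ (r - k)) * 'C(n - k - 1, r - k - 1) <= #|E| ->
      exists (h : 'I_p -> {set 'I_n}) (Y : {set 'I_n}),
        is_sunflower E h Y /\ #|Y| <= k.
Proof.
move=> r_ge3 /andP[_ k_le] p_gt0.
exists r => n r_le_n E uE bigE.
have k_lt_r : k < r by lia.
set D := 'C(n - k - 1, r - k - 1).
have D_gt0 : 0 < D by rewrite bin_gt0; lia.
have codeg (S : {set 'I_n}) : #|S| = k.+1 -> codegree E S <= D.
  move=> cardS; have := codegree_binomial S uE.
  by rewrite /D card_ord cardS -!subnDA !addn1.
have ltE : (p.-1 * r) ^ k.+1 * D < #|E|.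
  by apply: leq_trans bigE; rewrite ltn_pmul2r // petal_bound // ltnW.
have [h [Y [sf cardY]]] := sunflower_small_core k_lt_r uE codeg ltE.
by exists h, Y.
Qed.
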